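(* Let $\alpha,\beta>0$, $\mathbf{c}=(c_j)_{j\in\mathbb{Z}}\in L^\infty(\mathbb{R}_+,\ell^\infty(\mathbb{Z}))$ and $\zeta,\xi:\mathbb{R}_+\to\mathbb{R}$ continuous. Let $W_j,Q_j\in\mathscr{C}^1([0,+\infty),\mathbb{R})$ ($j\in\mathbb{Z}$) satisfy, for all $t>0$ and integers $\zeta(t)\le j\le\xi(t)$, $$W_j'(t)\ge-2\alpha W_j(t)+\beta(Q_j(t)+Q_{j+1}(t)),\qquad Q_j'(t)\ge c_j(t)Q_j(t)+\alpha(W_j(t)+W_{j-1}(t)).$$ Assume $W_j(0)\ge0$, $Q_j(0)\ge0$ for all integers $\zeta(0)-1\le j\le\xi(0)+1$, and $W_j(t)\ge0$, $Q_j(t)\ge0$ for all $t>0$ and integers $j\in[\zeta(t)-1,\zeta(t))\cup(\xi(t),\xi(t)+1]$. Then $W_j(t)\ge0$ and $Q_j(t)\ge0$ for all $t>0$ and integers $\zeta(t)\le j\le\xi(t)$. *)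

From HB Require Import structures.
From mathcomp Require Import all_boot all_order all_algebra.
From mathcomp Require Import all_classical all_reals all_analysis.
Set Implicit Arguments. Unset Strict Implicit. Unset Printing Implicit Defensive.
Import Order.TTheory GRing.Theory Num.Theory.
Import numFieldNormedType.Exports.
Local Open Scope classical_set_scope.
Local Open Scope ring_scope.

(* f : R -> R is C^1 on [0,+oo): differentiable at every t > 0, with a
   right derivative at 0, the resulting derivative being continuous on
   [0,+oo).  Values of f at negative arguments are irrelevant. *)
Definition C1_Rplus {R : realType} (f : R -> R) : Prop :=
  exists f' : R -> R,
    (forall t : R, 0 < t -> is_derive t 1 f (f' t)) /\
    ((fun h : R => h^-1 * (f h - f 0)) @ (0 : R)^'+ --> f' 0) /\
    {within [set x : R | 0 <= x], continuous f'}.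

(* c = (c_j)_{j in Z} belongs to L^oo(R_+, l^oo(Z)): each component is
   Lebesgue measurable on R_+ and sup_j |c_j(t)| is essentially bounded
   on R_+. *)
Definition Linf_linf {R : realType} (c : int -> R -> R) : Prop :=
  (forall j : int, measurable_fun [set x : R | 0 <= x] (c j)) /\
  exists M : R,
    {ae (@lebesgue_measure R), forall t : R, 0 <= t ->
        forall j : int, `|c j t| <= M}.

From HB Require Import structures.
From mathcomp Require Import all_boot all_order all_algebra.
From mathcomp Require Import all_classical all_reals all_analysis.
From mathcomp Require Import measurable_realfun zify lra.
Import Order.TTheory GRing.Theory Num.Theory.
Import numFieldNormedType.Exports.
Local Open Scope classical_set_scope.
Local Open Scope ring_scope.

(* Let M bound |c_j| almost everywhere, K > |M| + 2 alpha + 2 beta and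
   p(t) = e exp(K t).  Then W_j + p and Q_j + p stay positive on the window: at a
   first time t where, say, W_j + p vanishes, the neighbours Q_j + p, Q_(j+1) + p
   are still >= 0 (inside the window by minimality of t, on the collar by
   hypothesis), so W_j' + K p >= (K + 2 alpha - 2 beta) p > 0, whereas W_j + p
   decreases to 0 from the left.  The case of Q_j is the same, with the a.e. bound
   on c_j turned into the pointwise bound c_j Q_j >= -|M| |Q_j| by continuity.
   Letting e -> 0 gives the claim. *)

Lemma ae_lebesgue_not_near {R : realType} {P : R -> Prop} (t : R) :
  {ae (@lebesgue_measure R), forall s, P s} -> ~ \forall s \near t, ~ P s.
Proof.
move=> [N [mN N0 notPN]] /nbhs_ballP[r /= r0 ballnotP].
have : (lebesgue_measure (ball t r) <= lebesgue_measure N)%E.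
  apply: le_measure; rewrite ?inE //; first exact: measurable_ball.
  by move=> s /ballnotP; exact: notPN.
rewrite N0 lebesgue_measure_ball ?(ltW r0) // lee_fin.
by rewrite leNgt mulrn_wgt0.
Qed.

Lemma near_forall_int_itv {R : realType} {T : Type} {F : set_system T}
    {FF : Filter F} {a b : R} {P : int -> T -> Prop} :
  (forall j : int, a < j%:~R < b -> \forall x \near F, P j x) ->
  \forall x \near F, forall j : int, a < j%:~R < b -> P j x.
Proof.
move=> near_P.
pose n := `|Num.floor b - Num.floor a|%N.
pose k (i : 'I_n) : int := Num.floor a + 1 + (i : nat)%:Z.
have : \forall x \near F, forall i : 'I_n, a < (k i)%:~R < b -> P (k i) x.
  apply: filter_forall => i; have [abi|] := pselect (a < (k i)%:~R < b).
    by apply: filterS (near_P _ abi) => x + _.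
  by move=> nabi; apply: nearW => x /nabi.
apply: filterS => x Pk j abj.
have [aj jb] := andP abj.
have lt_aj : Num.floor a < j by rewrite floor_lt_int.
have le_jb : j <= Num.floor b by rewrite floor_ge_int ltW.
have lt_in : (`|(j - Num.floor a - 1)%R|%N < n)%N by rewrite /n; lia.
have ek : k (Ordinal lt_in) = j by rewrite /k /=; lia.
by rewrite -ek; apply: Pk; rewrite ek.
Qed.

Lemma is_derive_le0_left {R : realType} {f : R -> R} {t l : R} :
  is_derive t 1 f l -> (\forall s \near t^'-, f t <= f s) -> l <= 0.
Proof.
move=> [df <-] fge; rewrite ['D_1 f t]cvg_at_leftE //.
apply: limr_le.
  rewrite -(cvg_at_leftE (fun h => h^-1 *: ((f \o shift t) _ - f t))) //.
  apply: cvg_trans df; apply: cvg_app.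
  move=> A [r r0 Ar]; exists r => // h hr hlt0; apply: Ar => //.
  exact/ltr0_neq0.
move: fge; rewrite near_withinE => /nbhs0P fge.
near=> h; apply: mulr_le0_ge0.
  by rewrite invr_le0; apply: ltW; near: h; exists 1 => /=.
rewrite subr_ge0 [_%:A]mulr1 /= addrC; near: h.
rewrite near_withinE; apply: filterS fge => h fh hlt0.
by apply: fh; rewrite gtrDl.
Unshelve. all: by end_near. Qed.

Lemma Rpos_induction {R : realType} {P : R -> Prop} :
  (\forall s \near 0^'+, P s) ->
  (forall t, 0 < t -> (forall s, 0 < s < t -> P s) -> \forall s \near t, P s) ->
  forall t, 0 < t -> P t.
Proof.
move=> P_start P_step t1 t1_gt0; apply: contrapT => nPt1.
pose S := [set s | 0 < s /\ ~ P s].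
have S_lb : has_lbound S by exists 0 => s [/ltW].
have S_ne : S !=set0 by exists t1.
have P_below : forall s, 0 < s < inf S -> P s.
  move=> s /andP[s_gt0 s_lt]; apply: contrapT => nPs.
  by have := ge_inf S_lb (conj s_gt0 nPs); rewrite leNgt s_lt.
have inf_gt0 : 0 < inf S.
  move: P_start; rewrite near_withinE => /nbhs_ballP[d /= d_gt0 Pd].
  apply: lt_le_trans d_gt0 _; apply: lb_le_inf => // s [s_gt0 nPs].
  rewrite leNgt; apply/negP => s_lt; apply: nPs; apply: (Pd _ _ s_gt0).
  by rewrite /ball /= sub0r normrN gtr0_norm.
move: (P_step _ inf_gt0 P_below) => /nbhs_ballP[d /= d_gt0 Pd].
have [s [s_gt0 nPs] s_lt] : exists2 s, S s & s < inf S + d.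
  by apply: inf_lt => //; rewrite ltrDl.
have le_s := ge_inf S_lb (conj s_gt0 nPs).
apply: nPs; apply: Pd.
by rewrite /ball /= ler0_norm ?subr_le0 // opprB ltrBlDl.
Qed.

Lemma ge0_of_perturbation {R : realType} {x E : R} :
  0 < E -> (forall e, 0 < e -> 0 < x + e * E) -> 0 <= x.
Proof.
move=> E_gt0 pert; apply/ler_addgt0Pr => e e_gt0.
by have := pert _ (divr_gt0 e_gt0 E_gt0); rewrite divfK ?gt_eqF // => /ltW.
Qed.

Lemma is_derive_continuous {R : realType} {f : R -> R} {t l : R} :
  is_derive t 1 f l -> {for t, continuous f}.
Proof. by move=> [df _]; exact/differentiable_continuous/derivable1_diffP. Qed.

Lemma is_derive_scaled_expR {R : realType} (e K t : R) :
  is_derive t 1 (fun s => e * expR (K * s)) (K * (e * expR (K * t))).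
Proof. by apply: is_derive_eq; rewrite [K%:A]mulr1 mulrCA mulrC. Qed.

Lemma continuous_within_ge0_at {R : realType} {f : R -> R} {t : R} :
  {within [set x : R | 0 <= x], continuous f} -> 0 < t -> {for t, continuous f}.
Proof.
rewrite -set_itvcy => /continuous_within_itvcyP[+ _] t_gt0.
by apply; rewrite in_itv /= andbT.
Qed.

Lemma continuous_within_ge0_at_right0 {R : realType} {f : R -> R} :
  {within [set x : R | 0 <= x], continuous f} -> f @ (0 : R)^'+ --> f 0.
Proof. by rewrite -set_itvcy => /continuous_within_itvcyP[]. Qed.

Section C1_Rplus.
Context {R : realType} {f : R -> R} (f_C1 : C1_Rplus f).

Lemma C1_Rplus_is_derive {t : R} : 0 < t -> is_derive t 1 f (derive1 f t).
Proof.
case: f_C1 => f' [df [_ _]] t_gt0.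
by have dft := df t t_gt0; rewrite derive1E derive_val.
Qed.

Lemma C1_Rplus_derive1_continuous {t : R} :
  0 < t -> {for t, continuous (derive1 f)}.
Proof.
case: f_C1 => f' [df [_ f'_cont]] t_gt0.
have f'E : \forall s \near t, f' s = derive1 f s.
  near=> s; have s_gt0 : 0 < s by near: s; exact: lt_nbhsr t_gt0.
  by have dfs := df s s_gt0; rewrite derive1E derive_val.
have : derive1 f @ t --> f' t.
  exact: cvg_trans (near_eq_cvg f'E) (continuous_within_ge0_at f'_cont t_gt0).
by rewrite (nbhs_singleton f'E).
Unshelve. all: by end_near. Qed.

Lemma C1_Rplus_cvg_at_right0 : f @ (0 : R)^'+ --> f 0.
Proof.
case: f_C1 => f' [_ [quot_cvg _]].
have fE : \forall h \near (0 : R)^'+, f 0 + h * (h^-1 * (f h - f 0)) = f h.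
  near=> h; rewrite mulrA divff ?mul1r; first by rewrite addrC subrK.
  by apply: lt0r_neq0; near: h; exact: nbhs_right_gt.
apply: cvg_trans (near_eq_cvg fE) _.
have : (fun h => f 0 + h * (h^-1 * (f h - f 0))) @ (0 : R)^'+ --> f 0 + 0 * f' 0.
  apply: cvgD; first exact: cvg_cst.
  by apply: cvgM quot_cvg; exact: cvg_at_right_filter cvg_id.
by rewrite mul0r addr0.
Unshelve. all: by end_near. Qed.

End C1_Rplus.

Section PerturbedPositivity.
Variables (R : realType) (alpha beta M K : R) (c : int -> R -> R).
Variables (zeta xi : R -> R) (W Q : int -> R -> R) (p : R -> R).
Hypotheses (alpha_gt0 : 0 < alpha) (beta_gt0 : 0 < beta).
Hypothesis c_bound :
  {ae (@lebesgue_measure R), forall t : R, 0 <= t -> forall j : int, `|c j t| <= M}.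
Hypotheses (zeta_cont : {within [set x : R | 0 <= x], continuous zeta})
  (xi_cont : {within [set x : R | 0 <= x], continuous xi}).
Hypotheses (W_C1 : forall j : int, C1_Rplus (W j))
  (Q_C1 : forall j : int, C1_Rplus (Q j)).
Hypothesis W_Q_ineq : forall (t : R) (j : int), 0 < t -> zeta t <= j%:~R <= xi t ->
  derive1 (W j) t >= - (2 * alpha) * W j t + beta * (Q j t + Q (j + 1)%R t) /\
  derive1 (Q j) t >= c j t * Q j t + alpha * (W j t + W (j - 1)%R t).
Hypothesis init_ge0 : forall j : int, zeta 0 - 1 <= j%:~R <= xi 0 + 1 ->
  0 <= W j 0 /\ 0 <= Q j 0.
Hypothesis collar_ge0 : forall (t : R) (j : int), 0 < t ->
  (zeta t - 1 <= j%:~R < zeta t) || (xi t < j%:~R <= xi t + 1) ->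
  0 <= W j t /\ 0 <= Q j t.
Hypothesis K_large : `|M| + 2 * alpha + 2 * beta < K.
Hypotheses (p_gt0 : forall s : R, 0 < p s)
  (p_deriv : forall s : R, is_derive s 1 p (K * p s)).

Let inside (t : R) (j : int) := zeta t <= j%:~R <= xi t.
Let collar (t : R) (j : int) :=
  (zeta t - 1 <= j%:~R < zeta t) || (xi t < j%:~R <= xi t + 1).
Let pos_at (t : R) (j : int) := 0 < W j t + p t /\ 0 < Q j t + p t.
Let pos (t : R) := forall j, inside t j -> pos_at t j.

Lemma inside_or_collar (t : R) (j : int) :
  zeta t - 1 <= j%:~R <= xi t + 1 -> inside t j \/ collar t j.
Proof.
move=> /andP[lo hi]; rewrite /inside /collar.
have [_|_] := leP (zeta t) j%:~R; last by right; rewrite lo.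
have [_|_] := leP j%:~R (xi t); first by left.
by right; rewrite hi orbT.
Qed.

Lemma pos_at_collar {t : R} {j : int} : 0 < t -> collar t j -> pos_at t j.
Proof.
move=> t_gt0 /(collar_ge0 t j t_gt0)[W_ge0 Q_ge0].
by have := p_gt0 t; rewrite /pos_at; split; lra.
Qed.

Lemma near_extended_range {t : R} {j : int} :
  0 < t -> zeta t - 1 < j%:~R < xi t + 1 ->
  \forall s \near t, 0 < s /\ zeta s - 1 <= j%:~R <= xi s + 1.
Proof.
move=> t_gt0 /andP[lo hi].
have zeta_t := continuous_within_ge0_at zeta_cont t_gt0.
have xi_t := continuous_within_ge0_at xi_cont t_gt0.
near=> s; split; first by near: s; exact: lt_nbhsr t_gt0.
apply/andP; split; apply: ltW.
- rewrite ltrBlDr; near: s; apply: (cvgr_lt _ zeta_t); by rewrite -ltrBlDr.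
- rewrite -ltrBlDr; near: s; apply: (cvgr_gt _ xi_t); by rewrite ltrBlDr.
Unshelve. all: by end_near. Qed.

Lemma pos_at_left {t : R} {j : int} : 0 < t -> (forall s, 0 < s < t -> pos s) ->
  zeta t - 1 < j%:~R < xi t + 1 -> \forall s \near t^'-, pos_at s j.
Proof.
move=> t_gt0 pos_below jrange.
have range_left : \forall s \near t^'-, 0 < s /\ zeta s - 1 <= j%:~R <= xi s + 1.
  exact: cvg_within (near_extended_range t_gt0 jrange).
near=> s.
have [s_gt0 /inside_or_collar[ins|col]] :
  0 < s /\ zeta s - 1 <= j%:~R <= xi s + 1 by near: s.
- apply: pos_below ins; rewrite s_gt0 /=; near: s; exact: nbhs_left_lt.
- exact: pos_at_collar s_gt0 col.
Unshelve. all: by end_near. Qed.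

Lemma C1_Rplus_is_derive_addp {f : R -> R} {t : R} : C1_Rplus f -> 0 < t ->
  is_derive t 1 (f + p) (derive1 f t + K * p t).
Proof. by move=> f_C1 t_gt0; exact: is_deriveD (C1_Rplus_is_derive f_C1 t_gt0) _. Qed.

Lemma nonneg_of_pos_below {t : R} {j : int} : 0 < t -> (forall s, 0 < s < t -> pos s) ->
  zeta t - 1 <= j%:~R <= xi t + 1 -> 0 <= W j t + p t /\ 0 <= Q j t + p t.
Proof.
move=> t_gt0 pos_below jrange.
have [ins|col] := inside_or_collar t j jrange; last first.
  by have [? ?] := pos_at_collar t_gt0 col; split; apply: ltW.
have /(pos_at_left t_gt0 pos_below) pos_left : zeta t - 1 < j%:~R < xi t + 1.
  by move: ins => /andP[? ?]; apply/andP; split; lra.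
have left_lim (f : R -> R) : C1_Rplus f -> (f + p) @ t^'- --> f t + p t.
  move=> f_C1; apply: cvg_at_left_filter.
  exact: is_derive_continuous (C1_Rplus_is_derive_addp f_C1 t_gt0).
split.
- apply: cvgr_to_ge (left_lim _ (W_C1 j)) _.
  by apply: filterS pos_left => s [/ltW].
- apply: cvgr_to_ge (left_lim _ (Q_C1 j)) _.
  by apply: filterS pos_left => s [_ /ltW].
Qed.

Lemma touch_derive_le {f : R -> R} {t : R} :
  C1_Rplus f -> 0 < t -> f t + p t = 0 ->
  (\forall s \near t^'-, 0 < f s + p s) -> derive1 f t + K * p t <= 0.
Proof.
move=> f_C1 t_gt0 touch f_above.
apply: (is_derive_le0_left (C1_Rplus_is_derive_addp f_C1 t_gt0)).
apply: filterS f_above => s /ltW.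
by rewrite -[(f + p) t]/(f t + p t) touch.
Qed.

Lemma Q_derive_lower {t : R} {j : int} : 0 < t -> inside t j -> Q j t < 0 ->
  - `|M| * `|Q j t| + alpha * (W j t + W (j - 1) t) <= derive1 (Q j) t.
Proof.
(* Near t the index j is inside the window (on the collar Q_j >= 0), so the
   inequality holds wherever |c_j| <= M, i.e. almost everywhere; a strict
   failure at t would persist on a neighbourhood by continuity. *)
move=> t_gt0 ins Q_lt0; rewrite leNgt; apply/negP => der_lt.
have cont_t (f : R -> R) : C1_Rplus f -> {for t, continuous f}.
  by move=> f_C1; exact: is_derive_continuous (C1_Rplus_is_derive f_C1 t_gt0).
pose phi s := - `|M| * `|Q j s| + alpha * (W j s + W (j - 1) s) - derive1 (Q j) s.
have phi_cont : {for t, continuous phi}.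
  apply: cvgB _ (C1_Rplus_derive1_continuous (Q_C1 j) t_gt0).
  apply: cvgD; apply: cvgM; try exact: cvg_cst.
  - by apply: cvg_norm; exact: cont_t.
  - by apply: cvgD; exact: cont_t.
have phi_near : \forall s \near t, 0 < phi s.
  by apply: (cvgr_gt _ phi_cont); rewrite subr_gt0.
have Q_near : \forall s \near t, Q j s < 0.
  exact: cvgr_lt _ (cont_t _ (Q_C1 j)) _ Q_lt0.
have /(near_extended_range t_gt0) range_near : zeta t - 1 < j%:~R < xi t + 1.
  by move: ins => /andP[? ?]; apply/andP; split; lra.
apply: (ae_lebesgue_not_near t c_bound); near=> s => c_le.
have phi_s : 0 < phi s by near: s.
have Q_s : Q j s < 0 by near: s.
have [s_gt0 /inside_or_collar[ins_s|col_s]] :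
  0 < s /\ zeta s - 1 <= j%:~R <= xi s + 1 by near: s.
- have [_ dQ] := W_Q_ineq s j s_gt0 ins_s.
  have : `|c j s * Q j s| <= `|M| * `|Q j s|.
    by rewrite normrM ler_wpM2r // (le_trans (c_le (ltW s_gt0) j) (ler_norm M)).
  by rewrite ler_norml -mulNr => /andP[cQ _]; rewrite /phi in phi_s; lra.
- by have [_ Q_ge0] := collar_ge0 s j s_gt0 col_s; lra.
Unshelve. all: by end_near. Qed.

Lemma pos_of_pos_below {t : R} : 0 < t -> (forall s, 0 < s < t -> pos s) -> pos t.
Proof.
move=> t_gt0 pos_below j ins; have [zj jx] := andP ins.
have [Wj_ge0 Qj_ge0] : 0 <= W j t + p t /\ 0 <= Q j t + p t.
  by apply: nonneg_of_pos_below => //; apply/andP; split; lra.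
have [_ Qsucc_ge0] : 0 <= W (j + 1) t + p t /\ 0 <= Q (j + 1) t + p t.
  by apply: nonneg_of_pos_below => //; rewrite intrD; apply/andP; split; lra.
have [Wpred_ge0 _] : 0 <= W (j - 1) t + p t /\ 0 <= Q (j - 1) t + p t.
  by apply: nonneg_of_pos_below => //; rewrite intrB; apply/andP; split; lra.
have /near_andP[W_left Q_left] : \forall s \near t^'-, pos_at s j.
  by apply: pos_at_left => //; apply/andP; split; lra.
have p_t := p_gt0 t.
split; rewrite lt_neqAle ?Wj_ge0 ?Qj_ge0 andbT; apply/eqP => /esym touch.
- have := touch_derive_le (W_C1 j) t_gt0 touch W_left.
  have [dW _] := W_Q_ineq t j t_gt0 ins.
  rewrite (_ : W j t = - p t) in dW; last by lra.
  have := mulr_ge0 (ltW beta_gt0) Qj_ge0; have := mulr_ge0 (ltW beta_gt0) Qsucc_ge0.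
  have gap : 0 < K + 2 * alpha - 2 * beta.
    by move: (K_large) (normr_ge0 M) (alpha_gt0); lra.
  have := mulr_gt0 gap p_t.
  lra.
- have := touch_derive_le (Q_C1 j) t_gt0 touch Q_left.
  have Q_neg : Q j t < 0 by lra.
  have := Q_derive_lower t_gt0 ins Q_neg.
  rewrite (_ : `|Q j t| = p t); last by rewrite ltr0_norm; lra.
  have := mulr_ge0 (ltW alpha_gt0) Wj_ge0; have := mulr_ge0 (ltW alpha_gt0) Wpred_ge0.
  have gap : 0 < K - `|M| - 2 * alpha.
    by move: (K_large) (beta_gt0); lra.
  have := mulr_gt0 gap p_t.
  lra.
Qed.

Lemma pos_near0 : \forall s \near 0^'+, pos s.
Proof.
have p_right0 : p @ 0^'+ --> p 0.
  exact: cvg_at_right_filter (is_derive_continuous (p_deriv 0)).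
have near_pos (f : R -> R) : C1_Rplus f -> 0 <= f 0 ->
    \forall s \near 0^'+, 0 < f s + p s.
  move=> f_C1 f0_ge0.
  apply: (cvgr_gt _ (cvgD (C1_Rplus_cvg_at_right0 f_C1) p_right0)).
  by move: (p_gt0 0); lra.
have all_j : \forall s \near 0^'+, forall j : int,
    zeta 0 - 1 < j%:~R < xi 0 + 1 -> pos_at s j.
  apply: near_forall_int_itv => j /andP[lo hi].
  have [W0 Q0] : 0 <= W j 0 /\ 0 <= Q j 0 by apply: init_ge0; rewrite !ltW.
  by apply/near_andP; split;
    [exact: near_pos _ (W_C1 j) W0 | exact: near_pos _ (Q_C1 j) Q0].
have zeta_near : \forall s \near 0^'+, zeta 0 - 1 < zeta s.
  by apply: (cvgr_gt _ (continuous_within_ge0_at_right0 zeta_cont)); rewrite gtrBl.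
have xi_near : \forall s \near 0^'+, xi s < xi 0 + 1.
  by apply: (cvgr_lt _ (continuous_within_ge0_at_right0 xi_cont)); rewrite ltrDl.
near=> s => j /andP[zj jx].
have all_s : forall j : int, zeta 0 - 1 < j%:~R < xi 0 + 1 -> pos_at s j by near: s.
have : zeta 0 - 1 < zeta s by near: s.
have : xi s < xi 0 + 1 by near: s.
by move=> *; apply: all_s; apply/andP; split; lra.
Unshelve. all: by end_near. Qed.

Lemma pos_open {t : R} : 0 < t -> pos t -> \forall s \near t, pos s.
Proof.
move=> t_gt0 pos_t.
have zeta_t := continuous_within_ge0_at zeta_cont t_gt0.
have xi_t := continuous_within_ge0_at xi_cont t_gt0.
have all_j : \forall s \near t, forall j : int,
    zeta t - 1 < j%:~R < xi t + 1 -> inside s j -> pos_at s j.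
  apply: (@near_forall_int_itv _ _ (nbhs t) _) => j _.
  have [ins|] := boolP (inside t j).
    have near_pos (f : R -> R) : C1_Rplus f -> 0 < f t + p t ->
        \forall s \near t, 0 < f s + p s.
      move=> f_C1; apply: (cvgr_gt _ (is_derive_continuous
        (C1_Rplus_is_derive_addp f_C1 t_gt0))).
    have [Wp Qp] := pos_t j ins.
    by apply: filterS2 (near_pos _ (W_C1 j) Wp) (near_pos _ (Q_C1 j) Qp).
  rewrite negb_and -!ltNge => /orP[jz|xj].
  - by apply: filterS (cvgr_gt _ zeta_t _ jz) => s ? /andP[? _]; exfalso; lra.
  - by apply: filterS (cvgr_lt _ xi_t _ xj) => s ? /andP[_ ?]; exfalso; lra.
have zeta_near : \forall s \near t, zeta t - 1 < zeta s.
  by apply: (cvgr_gt _ zeta_t); rewrite gtrBl.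
have xi_near : \forall s \near t, xi s < xi t + 1.
  by apply: (cvgr_lt _ xi_t); rewrite ltrDl.
near=> s => j ins; have [zj jx] := andP ins.
have all_s : forall j : int, zeta t - 1 < j%:~R < xi t + 1 -> inside s j -> pos_at s j.
  by near: s.
have : zeta t - 1 < zeta s by near: s.
have : xi s < xi t + 1 by near: s.
by move=> *; apply: all_s ins; apply/andP; split; lra.
Unshelve. all: by end_near. Qed.

Lemma perturbed_pos (t : R) (j : int) : 0 < t -> zeta t <= j%:~R <= xi t ->
  0 < W j t + p t /\ 0 < Q j t + p t.
Proof.
move=> t_gt0; move: j; apply: (@Rpos_induction _ pos) t t_gt0.
  exact: pos_near0.
by move=> t t_gt0 pos_below; exact: pos_open t_gt0 (pos_of_pos_below t_gt0 pos_below).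
Qed.

End PerturbedPositivity.

Theorem propositionB6 (R : realType) (alpha beta : R)
  (c : int -> R -> R) (zeta xi : R -> R) (W Q : int -> R -> R) :
  0 < alpha -> 0 < beta ->
  Linf_linf c ->
  {within [set x : R | 0 <= x], continuous zeta} ->
  {within [set x : R | 0 <= x], continuous xi} ->
  (forall j : int, C1_Rplus (W j)) ->
  (forall j : int, C1_Rplus (Q j)) ->
  (forall (t : R) (j : int), 0 < t -> zeta t <= j%:~R <= xi t ->
     derive1 (W j) t >= - (2 * alpha) * W j t + beta * (Q j t + Q (j + 1)%R t) /\
     derive1 (Q j) t >= c j t * Q j t + alpha * (W j t + W (j - 1)%R t)) ->
  (forall j : int, zeta 0 - 1 <= j%:~R <= xi 0 + 1 ->
     0 <= W j 0 /\ 0 <= Q j 0) ->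
  (forall (t : R) (j : int), 0 < t ->
     (zeta t - 1 <= j%:~R < zeta t) || (xi t < j%:~R <= xi t + 1) ->
     0 <= W j t /\ 0 <= Q j t) ->
  forall (t : R) (j : int), 0 < t -> zeta t <= j%:~R <= xi t ->
     0 <= W j t /\ 0 <= Q j t.
Proof.
move=> alpha_gt0 beta_gt0 [_ [M c_bound]] zeta_cont xi_cont W_C1 Q_C1 W_Q_ineq
  init_ge0 collar_ge0 t j t_gt0 ins.
pose K := `|M| + 2 * alpha + 2 * beta + 1.
have K_large : `|M| + 2 * alpha + 2 * beta < K by rewrite ltrDl.
have pert e : 0 < e ->
    0 < W j t + e * expR (K * t) /\ 0 < Q j t + e * expR (K * t).
  move=> e_gt0.
  apply: (@perturbed_pos R alpha beta M K c zeta xi W Q (fun s => e * expR (K * s)))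
    => // [s|s].
  - by rewrite mulr_gt0 ?expR_gt0.
  - exact: is_derive_scaled_expR.
by split; apply: (ge0_of_perturbation (expR_gt0 (K * t))) => e /pert[].
Qed.
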